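(* Let $L\ge 3$, $W=(\mathbb{Z}/2\mathbb{Z})^{*L}$, $q\in[\frac{1}{L-1},1]$, $l\ge 2$, $\beta\in\mathbb{C}_q^1[W]\ominus S_1$ and $\gamma\in\mathbb{C}_q^l[W]\ominus S_l$. Then for every $m,n\in\mathbb{N}_0$ there exist real constants $b^{m,n}_{k,j},c^{m,n}_{k,j}$ ($0\le k\le m$, $0\le j\le n$) such that $$h_m\beta h_n=\sum_{k\le m,\,j\le n}b^{m,n}_{k,j}\beta_{k,j},\qquad h_m\gamma h_n=\sum_{k\le m,\,j\le n}c^{m,n}_{k,j}\gamma_{k,j},$$ and such that for $m,n\in\mathbb{N}$, $0\le k\le m$, $0\le j\le n$, $$c^{m,n}_{k,j}=b^{m,n}_{k,j}+b^{m,n}_{k+1,j+1},$$ with the convention $b^{m,n}_{m+1,n+1}=0$ (and more generally $b^{m,n}_{k,j}=0$ when $k>m$ or $j>n$).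
   Context: $W=(\mathbb{Z}/2\mathbb{Z})^{*L}$ is the free product of $L$ copies of $\mathbb{Z}/2\mathbb{Z}$ with canonical generating set $S$ and word length $|\cdot|$. Put $p=\frac{q-1}{q^2}$. $\mathbb{C}_q[W]$ is the $*$-algebra with linear basis $\{T_w\}_{w\in W}$, $T_e=1$, $T_w^*=T_{w^{-1}}$, and $T_sT_w=T_{sw}$ if $|sw|>|w|$, $T_sT_w=T_{sw}+pT_w$ if $|sw|<|w|$ ($s\in S,w\in W$). Elements of $\mathbb{C}_q[W]$ are identified with vectors in $\ell^2(W)$ via $T_w\mapsto\delta_w$. $h_0=1$, $h_m=\sum_{|w|=m}T_w$. For $l\in\mathbb{N}_0$, $q_l$ is the projection onto $\mathrm{span}\{T_w:|w|=l\}$ and $\mathbb{C}_q^l[W]=q_l(\mathbb{C}_q[W])$. $S_l=\mathrm{span}\{q_l(h_1x),q_l(xh_1): x\in\mathbb{C}_q^{l-1}[W]\}$ and $\mathbb{C}_q^l[W]\ominus S_l$ is the orthogonal complement of $S_l$ in $\mathbb{C}_q^l[W]$ in $\ell^2(W)$. For $\gamma\in\mathbb{C}_q^l[W]$ and $m,n\in\mathbb{N}_0$, $\gamma_{m,n}=q_{m+n+l}(h_m\gamma h_n)$. *)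

From HB Require Import structures.
From mathcomp Require Import all_boot all_order all_algebra.
From mathcomp Require Import reals.
From mathcomp Require Import complex.
Set Implicit Arguments. Unset Strict Implicit. Unset Printing Implicit Defensive.
Import Order.TTheory GRing.Theory Num.Theory.
Local Open Scope ring_scope.
Local Open Scope complex_scope.

(* W = (Z/2Z)^{*L}: elements are reduced words over the generators 'I_L,
   i.e. sequences with no two consecutive equal letters; |w| = size w.
   Vectors of l^2(W) (in particular elements of C_q[W], via T_w |-> delta_w)
   are coefficient functions  word L -> R[i]  (value 0 on non-reduced words). *)
Section Hecke.
Variables (R : realType) (L : nat) (q : R).

Definition word := seq 'I_L.
Definition reduced (w : word) : bool := sorted (fun a b : 'I_L => a != b) w.
Definition vec := word -> R[i].

Definition pq : R[i] := ((q - 1) / q ^+ 2)%:C.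

Definition startsw (s : 'I_L) (w : word) : bool :=
  if w is a :: _ then a == s else false.
Definition smulw (s : 'I_L) (w : word) : word :=
  if w is a :: w' then (if a == s then w' else s :: w) else [:: s].
Definition endsw (s : 'I_L) (w : word) : bool := startsw s (rev w).
Definition wmuls (w : word) (s : 'I_L) : word := rev (smulw s (rev w)).

(* left multiplication by T_s, from T_s T_v = T_{sv} (|sv|>|v|),
   T_s T_v = T_{sv} + p T_v (|sv|<|v|) *)
Definition lmulS (s : 'I_L) (x : vec) : vec := fun w =>
  if reduced w then x (smulw s w) + (if startsw s w then pq * x w else 0)
  else 0.
(* right multiplication by T_s (image of the rule above under the
   star-involution): T_v T_s = T_{vs} (|vs|>|v|), T_{vs} + p T_v (|vs|<|v|) *)
Definition rmulS (x : vec) (s : 'I_L) : vec := fun w =>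
  if reduced w then x (wmuls w s) + (if endsw s w then pq * x w else 0)
  else 0.

(* T_u x  and  x T_v  for reduced u = s1...sk (T_u = T_{s1}...T_{sk}) *)
Definition lmulW (u : word) (x : vec) : vec := foldr lmulS x u.
Definition rmulW (x : vec) (v : word) : vec := foldl rmulS x v.

(* h_m x, x h_n, h_m x h_n  (h_m = sum_{|w|=m} T_w) *)
Definition hL (m : nat) (x : vec) : vec := fun w =>
  \sum_(t : m.-tuple 'I_L | reduced t) lmulW t x w.
Definition hR (x : vec) (n : nat) : vec := fun w =>
  \sum_(t : n.-tuple 'I_L | reduced t) rmulW x t w.
Definition hxh (m : nat) (x : vec) (n : nat) : vec := hR (hL m x) n.

Definition proj (l : nat) (x : vec) : vec := fun w =>
  if size w == l then x w else 0.

Definition inCl (l : nat) (x : vec) : Prop :=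
  forall w, x w != 0 -> reduced w /\ size w = l.

(* membership in S_l = span{q_l(h_1 x), q_l(x h_1) : x in C_q^{l-1}[W]};
   both generating families are linear images of a subspace, so the span
   is their sum *)
Definition inSl (l : nat) (y : vec) : Prop :=
  exists x1 x2 : vec, inCl l.-1 x1 /\ inCl l.-1 x2 /\
    y = (fun w => proj l (hL 1 x1) w + proj l (hR x2 1) w).

(* l^2 inner product <x,y> = sum_w x(w) conj(y(w)) for x in C_q^l[W]
   (x vanishes off the words of length l, so the sum runs over those) *)
Definition inner_l (l : nat) (x y : vec) : R[i] :=
  \sum_(t : l.-tuple 'I_L) x t * Num.conj (y t).

Definition inComplS (l : nat) (x : vec) : Prop :=
  inCl l x /\ forall y, inSl l y -> inner_l l x y = 0.

Definition gmn (l : nat) (g : vec) (m n : nat) : vec :=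
  proj (m + n + l) (hxh m g n).

End Hecke.

From HB Require Import structures.
From mathcomp Require Import all_boot all_order all_algebra.
From mathcomp Require Import reals.
From mathcomp Require Import complex.
From mathcomp Require Import ring zify.
From Stdlib Require Import FunctionalExtensionality.
Import Order.TTheory GRing.Theory Num.Theory.
Local Open Scope ring_scope.
Local Open Scope complex_scope.
Set Implicit Arguments. Unset Strict Implicit. Unset Printing Implicit Defensive.

(** For [x] in [C_q^l[W]] orthogonal to [S_l], orthogonality to
  [q_l(h_1 delta_v)] and [q_l(delta_v h_1)] says that [sum_s x(s v) = 0 = sum_s x(v s)]
  for every word [v] of length [l-1].  Given a coefficient array [f], let [E_f x] take
  at a reduced word [w] the value [sum_k f(k, |w|-l-k) x(w[k, k+l))], a weighted sum
  over the length-[l] subwords of [w].  The vanishing sums absorb every letter of [h_1]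
  that would reach [x] from outside, so [h_1 E_f x = E_f' x] with [f'] an explicit
  linear recursion in [f]; only for [l = 1] is there an extra term, coming from
  [sum_(s <> a) x(s) = - x(a)].  The Hecke recursion
  [h_1 h_(m+1) = h_(m+2) + p h_(m+1) + (L - [m > 0]) h_m] and word reversal (for right
  multiplication) give [h_m x h_n = E_B x] with [B] supported in [[0,m] x [0,n]] and
  corner entry [1]; on words of length [m+n+l] this identifies [x_(k,j)] with the
  [(k,j)] window, so [B] is the coefficient array sought.  Finally
  [f |-> f(k,j) + f(k+1,j+1)] intertwines the recursion for [l = 1] with the one for
  [l >= 2], which is the relation [c = b + b(.+1,.+1)]. *)

Lemma big_tuple_cons (T : finType) (V : nmodType) n (F : n.+1.-tuple T -> V) :
  \sum_(u : n.+1.-tuple T) F u = \sum_(s : T) \sum_(t : n.-tuple T) F [tuple of s :: t].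
Proof.
rewrite pair_big /=.
rewrite (reindex (fun p : T * n.-tuple T => [tuple of p.1 :: p.2])) //=.
exists (fun u => (thead u, [tuple of behead u])).
- by move=> [s t] _ /=; rewrite theadE; congr pair; apply: val_inj.
- by move=> u _; rewrite [in RHS](tuple_eta u); apply: val_inj.
Qed.

Lemma big_tuple0 (T : finType) (V : nmodType) (F : 0.-tuple T -> V) :
  \sum_(t : 0.-tuple T) F t = F [tuple].
Proof. by rewrite (big_pred1 [tuple]) // => t; rewrite /= (tuple0 t); apply/esym/eqP. Qed.

Lemma sum_neq_const (T : finType) (V : nmodType) (b : T) (c : V) :
  \sum_(s | s != b) c = c *+ #|T|.-1.
Proof.
rewrite sumr_const; congr (_ *+ _).
by rewrite -(cardC1 b); apply: eq_card => s; rewrite !inE.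
Qed.

Section HeckeAlgebra.
Variables (R : realType) (L : nat) (q : R).
Local Notation word := (word L).
Local Notation vec := (vec R L).
Local Notation lS := (lmulS q).
Local Notation rS := (rmulS q).

(** * Word reversal *)

Lemma reduced_rev (w : word) : reduced (rev w) = reduced w.
Proof.
rewrite /reduced rev_sorted; case: w => //= a w.
by apply: eq_path => x y /=; rewrite eq_sym.
Qed.

Definition vrev (y : vec) : vec := fun w => y (rev w).

Lemma vrevK : involutive vrev.
Proof. by move=> y; apply: functional_extensionality => w; rewrite /vrev revK. Qed.

Lemma rmulS_vrev (y : vec) s : rS y s = vrev (lS s (vrev y)).
Proof.
by apply: functional_extensionality => w; rewrite /rmulS /lmulS /vrev reduced_rev revK.
Qed.

Lemma rmulW_vrev (y : vec) (t : word) : rmulW q y t = vrev (lmulW q (rev t) (vrev y)).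
Proof.
elim: t y => [|a t IH] y /=; first by rewrite /rmulW /lmulW /= vrevK.
rewrite /rmulW /= -/(rmulW q _ t) IH rmulS_vrev vrevK.
by rewrite /lmulW rev_cons foldr_rcons.
Qed.

Lemma hR_vrev (y : vec) n : hR q y n = vrev (hL q n (vrev y)).
Proof.
apply: functional_extensionality => w; rewrite /hR /vrev /hL.
under eq_bigr do rewrite rmulW_vrev.
rewrite (reindex_inj (h := @rev_tuple n _)) /=; last first.
  by move=> t1 t2 /(congr1 val) /= /(congr1 rev); rewrite !revK => /val_inj.
by apply: eq_big => t; rewrite ?reduced_rev // /vrev revK.
Qed.

(** * Multiplication by [h_m] *)

Lemma hL_sum m (y : vec) w : hL q m y w =
  \sum_(t : m.-tuple 'I_L) (if reduced t then lmulW q t y w else 0).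
Proof. by rewrite /hL big_mkcond. Qed.

Lemma hL0 (y : vec) : hL q 0 y = y.
Proof. by apply: functional_extensionality => w; rewrite hL_sum big_tuple0. Qed.

Lemma hL1 (y : vec) w : hL q 1 y w = \sum_(s : 'I_L) lS s y w.
Proof. by rewrite hL_sum big_tuple_cons; apply: eq_bigr => s _; rewrite big_tuple0. Qed.

Lemma hL1_nil (y : vec) : hL q 1 y [::] = \sum_(s : 'I_L) y [:: s].
Proof. by rewrite hL1; apply: eq_bigr => s _; rewrite /lmulS /= addr0. Qed.

Lemma hL1_cons (y : vec) a w : reduced (a :: w) ->
  hL q 1 y (a :: w) = y w + pq q * y (a :: w) + \sum_(s | s != a) y [:: s, a & w].
Proof.
move=> red_aw; rewrite hL1 (bigD1 a) //= {1}/lmulS red_aw /= eqxx; congr (_ + _).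
by apply: eq_bigr => s ne_sa; rewrite /lmulS red_aw /= eq_sym (negbTE ne_sa) addr0.
Qed.

Lemma lmulS_sum (I : Type) (r : seq I) (P : pred I) (F : I -> vec) s w :
  lS s (fun w => \sum_(i <- r | P i) F i w) w = \sum_(i <- r | P i) lS s (F i) w.
Proof.
rewrite /lmulS; case: ifP => _; last by rewrite big1.
rewrite big_split /=; congr (_ + _); case: startsw; first by rewrite mulr_sumr.
by rewrite big1.
Qed.

Lemma reduced_cons2 (s a : 'I_L) (w : word) :
  reduced [:: s, a & w] = (s != a) && reduced (a :: w).
Proof. by []. Qed.

Definition reduced_supp (y : vec) := forall w, ~~ reduced w -> y w = 0.

Lemma lmulW_reduced_supp t (y : vec) : reduced_supp y -> reduced_supp (lmulW q t y).
Proof. by case: t => [|a t] //= _ w /negbTE red_w; rewrite /lmulS red_w. Qed.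

Lemma lmulS_quad s (z : vec) w : reduced_supp z -> lS s (lS s z) w = z w + pq q * lS s z w.
Proof.
move=> z_supp; rewrite {1}/lmulS; case: ifP => red_w; last first.
  by rewrite z_supp ?red_w // /lmulS red_w mulr0 add0r.
case: w red_w => [|a w] red_w /=; first by rewrite /lmulS /= eqxx; ring.
case: eqP => [<-|/eqP ne_as].
  have red_w' : reduced w := path_sorted red_w.
  have [sm_aw st_aw] : smulw a w = a :: w /\ startsw a w = false.
    by case: w red_w {red_w'} => //= b w; rewrite /reduced /= eq_sym => /andP[/negbTE ->].
  by rewrite /lmulS red_w red_w' /= eqxx sm_aw st_aw; ring.
have red_saw : reduced [:: s, a & w] by rewrite reduced_cons2 eq_sym ne_as.
by rewrite /lmulS red_saw red_w /= eqxx (negbTE ne_as) /=; ring.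
Qed.

Lemma sum_reduced_cons (V : nmodType) m (F : word -> V) :
  \sum_(a : 'I_L) \sum_(t : m.-tuple 'I_L) (if reduced (a :: t) then F t else 0) =
  (\sum_(t : m.-tuple 'I_L) (if reduced t then F t else 0)) *+ (if m is 0 then L else L.-1).
Proof.
case: m F => [|m] F.
  by under eq_bigr do rewrite big_tuple0 /=; rewrite big_tuple0 sumr_const card_ord.
under eq_bigr do rewrite big_tuple_cons.
rewrite big_tuple_cons -sumrMnl exchange_big /=; apply: eq_bigr => b _.
rewrite -sumrMnl exchange_big /=; apply: eq_bigr => t _.
case: ifP => _; last by rewrite mul0rn big1 // => a _; rewrite andbF.
by under eq_bigr do rewrite andbT; rewrite -big_mkcond sum_neq_const card_ord.
Qed.

Lemma lmulS_lmulW_cons s a (t : word) (y : vec) w : reduced_supp y ->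
  (if reduced (a :: t) then lS s (lmulW q (a :: t) y) w else 0) =
  (if reduced [:: s, a & t] then lmulW q [:: s, a & t] y w else 0) +
  (if s == a then (if reduced (a :: t) then lmulW q t y w else 0) +
     pq q * (if reduced (a :: t) then lmulW q (a :: t) y w else 0) else 0).
Proof.
move=> y_supp; rewrite reduced_cons2; case: eqP => [->|/eqP ne_sa] /=.
  rewrite add0r; case: ifP => _; last by rewrite mulr0 addr0.
  by rewrite lmulS_quad //; apply: lmulW_reduced_supp.
by rewrite addr0.
Qed.

Lemma hL1_hL m (y : vec) w : reduced_supp y ->
  hL q 1 (hL q m.+1 y) w =
  hL q m.+2 y w + pq q * hL q m.+1 y w + (if m is 0 then L else L.-1)%:R * hL q m y w.
Proof.
move=> y_supp; rewrite hL1.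
have expand s : lS s (hL q m.+1 y) w = \sum_(a : 'I_L) \sum_(t : m.-tuple 'I_L)
    (if reduced (a :: t) then lS s (lmulW q (a :: t) y) w else 0).
  by rewrite /hL lmulS_sum big_mkcond big_tuple_cons.
under eq_bigr do rewrite expand.
under eq_bigr do under eq_bigr do under eq_bigr do rewrite lmulS_lmulW_cons //.
under eq_bigr do under eq_bigr do rewrite big_split.
under eq_bigr do rewrite big_split.
rewrite big_split -addrA; congr (_ + _).
  by rewrite hL_sum big_tuple_cons; apply: eq_bigr => s _; rewrite big_tuple_cons.
rewrite exchange_big /=.
under eq_bigr do rewrite exchange_big.
under eq_bigr do under eq_bigr do rewrite -big_mkcond big_pred1_eq.
under eq_bigr do rewrite big_split.
rewrite big_split addrC /= (sum_reduced_cons m (fun t => lmulW q t y w)) -hL_sum mulr_natl.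
congr (_ + _).
rewrite hL_sum big_tuple_cons mulr_sumr; apply: eq_bigr => a _.
by rewrite mulr_sumr.
Qed.

(** * Window sums *)

Definition pcoef : R := (q - 1) / q ^+ 2.

Lemma pqE : pq q = pcoef%:C. Proof. by []. Qed.

(** [f k j] weighs the window of [w] with [k] letters on its left and [j] on its right. *)
Definition window_sum l (x : vec) (f : nat -> nat -> R) : vec := fun w =>
  if reduced w && (l <= size w)%N then
    \sum_(k < (size w - l).+1) (f k (size w - l - k)%N)%:C * x (drop k (take (k + l) w))
  else 0.

Definition left_orth l (x : vec) :=
  inCl l x /\ forall v, \sum_(s : 'I_L) x (s :: v) = 0.

(** The flag [b] stands for [l == 1]; see [left_orth_sum_neq]. *)
Definition h1_coef (b : bool) (f : nat -> nat -> R) : nat -> nat -> R := fun k j =>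
  (if k is k'.+1 then f k' j else 0) + pcoef * f k j + L.-1%:R * f k.+1 j
  - (if b && (k == 0)%N then f 0%N j.+1 else 0).

Lemma window_sum_reduced_supp l x f : reduced_supp (window_sum l x f).
Proof. by move=> w /negbTE red_w; rewrite /window_sum red_w. Qed.

Lemma window_sum_short l x f (w : word) : (size w < l)%N -> window_sum l x f w = 0.
Proof. by move=> short_w; rewrite /window_sum leqNgt short_w andbF. Qed.

Lemma window_sum_full l x f (w : word) : reduced w -> size w = l ->
  window_sum l x f w = (f 0%N 0%N)%:C * x w.
Proof.
move=> red_w size_w; rewrite /window_sum red_w size_w leqnn /= subnn big_ord1 /=.
by rewrite drop0 add0n -size_w take_size.
Qed.

Lemma window_sum_cons l x f (s : 'I_L) (w : word) : reduced (s :: w) -> (l <= size w)%N ->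
  window_sum l x f (s :: w) = (f 0%N (size w - l).+1)%:C * x (take l (s :: w)) +
    \sum_(k < (size w - l).+1) (f k.+1 (size w - l - k)%N)%:C * x (drop k (take (k + l) w)).
Proof.
move=> red_sw l_le; rewrite /window_sum red_sw /= (leqW l_le) /= subSn //.
by rewrite big_ord_recl /= subn0 add0n drop0.
Qed.

Lemma left_orth_nonreduced l x w : left_orth l x -> ~~ reduced w -> x w = 0.
Proof. by move=> [x_supp _] red_w; apply/eqP; apply: contraNT red_w => /x_supp[]. Qed.

Lemma left_orth_sum_neq l x (a : 'I_L) (w : word) : (1 <= l)%N -> left_orth l x ->
  \sum_(s | s != a) x (take l [:: s, a & w]) = if l == 1%N then - x [:: a] else 0.
Proof.
case: l => // l _ x_orth.
have := x_orth.2 (take l (a :: w)).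
rewrite (bigD1 a) //= => /eqP; rewrite addrC addr_eq0 => /eqP ->.
case: l x_orth => [|l] x_orth //=.
by rewrite (left_orth_nonreduced x_orth) ?oppr0 // /reduced /= eqxx.
Qed.

Lemma sum_lincomb4 n (A B C D : 'I_n -> R) (X : 'I_n -> R[i]) :
  \sum_(k < n) (A k + pcoef * B k + L.-1%:R * C k - D k)%:C * X k =
  \sum_(k < n) (A k)%:C * X k + pcoef%:C * \sum_(k < n) (B k)%:C * X k
  + L.-1%:R * \sum_(k < n) (C k)%:C * X k - \sum_(k < n) (D k)%:C * X k.
Proof.
rewrite !mulr_sumr -!big_split -sumrB; apply: eq_bigr => k _ /=.
by rewrite !(rmorphD, rmorphN, rmorphM) rmorph_nat /=; ring.
Qed.

Lemma h1_window_sum_cons l x f a w : (1 <= l)%N -> left_orth l x ->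
  reduced (a :: w) -> (l <= size (a :: w))%N ->
  hL q 1 (window_sum l x f) (a :: w) = window_sum l x (h1_coef (l == 1%N) f) (a :: w).
Proof.
move=> l_ge1 x_orth red_aw l_le.
have red_saw s : s != a -> reduced [:: s, a & w] by move=> ne_sa; rewrite reduced_cons2 ne_sa.
set d := (size (a :: w) - l)%N.
have tail_sum : window_sum l x f w = \sum_(k < d)
    (f k (d - k.+1)%N)%:C * x (drop k.+1 (take (k.+1 + l) (a :: w))).
  case: (ltnP (size w) l) => [short_w|l_le_w].
    by rewrite window_sum_short // /d (_ : (size (a :: w) - l = 0)%N) ?big_ord0 //=; lia.
  by rewrite /window_sum (path_sorted red_aw : reduced w) l_le_w /d /= subSn.
rewrite hL1_cons //.
under eq_bigr => s ne_sa do rewrite (window_sum_cons x f (red_saw s ne_sa) l_le).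
rewrite big_split /= -mulr_sumr left_orth_sum_neq // sum_neq_const card_ord tail_sum.
rewrite /window_sum red_aw l_le /= -/d /h1_coef sum_lincomb4.
rewrite [X in _ = X + _ + _ - _]big_ord_recl /= rmorph0 mul0r add0r.
rewrite [X in _ = _ - X]big_ord_recl [X in _ = _ - (_ + X)]big1 ?addr0; last first.
  by move=> k _; rewrite /= /bump /= add1n andbF rmorph0 mul0r.
rewrite [X in _ = X + _ + _ - _](eq_bigr (fun k : 'I_d =>
    (f k (d - k.+1)%N)%:C * x (drop k.+1 (take (k.+1 + l) (a :: w))))); last first.
  by move=> k _; rewrite /bump /= !add0n add1n.
rewrite pqE /= subn0 drop0 add0n -mulr_natl.
case: eqP => [l1|_] /=; first by rewrite l1 /= take0; ring.
by rewrite (_ : (0 : R)%:C = 0) //; ring.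
Qed.

Lemma h1_window_sum l x f : (1 <= l)%N -> left_orth l x ->
  hL q 1 (window_sum l x f) = window_sum l x (h1_coef (l == 1%N) f).
Proof.
move=> l_ge1 x_orth; apply: functional_extensionality => w.
case red_w: (reduced w); last first.
  by rewrite window_sum_reduced_supp ?red_w // hL1 big1 // => s _; rewrite /lmulS red_w.
case: w red_w => [|a w] red_w.
  rewrite hL1_nil window_sum_short //.
  case: (l =P 1%N) => [l1|l_ne1]; last first.
    by rewrite big1 // => s _; apply: window_sum_short => /=; lia.
  under eq_bigr do rewrite window_sum_full ?l1 //.
  by rewrite -mulr_sumr x_orth.2 mulr0.
case: (leqP l (size (a :: w))) => [l_le|short_aw]; first exact: h1_window_sum_cons.
have short_w : (size w < l)%N by apply: ltnW.
rewrite /= in short_aw.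
rewrite hL1_cons // !window_sum_short // mulr0 addr0 add0r.
case: (l =P (size w).+2) => [l_eq|l_ne]; last first.
  by rewrite big1 // => s _; apply: window_sum_short => /=; lia.
have full_saw s : s != a ->
    window_sum l x f [:: s, a & w] = (f 0%N 0%N)%:C * x (take l [:: s, a & w]).
  by move=> ne_sa; rewrite window_sum_full ?reduced_cons2 ?ne_sa // take_oversize // l_eq.
by rewrite (eq_bigr _ full_saw) -mulr_sumr left_orth_sum_neq // l_eq mulr0.
Qed.

(** Read off [h_(m+2) = h_1 h_(m+1) - p h_(m+1) - (L - [m > 0]) h_m], see [hL1_hL]. *)
Fixpoint hm_coef (b : bool) (f : nat -> nat -> R) (m : nat) : nat -> nat -> R :=
  match m with
  | 0 => f
  | 1 => h1_coef b f
  | (m'.+1 as m1).+1 => fun k j => h1_coef b (hm_coef b f m1) k j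
      - pcoef * hm_coef b f m1 k j - (if m' is 0 then L else L.-1)%:R * hm_coef b f m' k j
  end.

Lemma window_sum_lincomb l x (g h u : nat -> nat -> R) (c : nat) w :
  window_sum l x (fun k j => g k j - pcoef * h k j - c%:R * u k j) w =
  window_sum l x g w - pcoef%:C * window_sum l x h w - c%:R * window_sum l x u w.
Proof.
rewrite /window_sum; case: ifP => _; last by ring.
rewrite !mulr_sumr -!sumrB; apply: eq_bigr => k _.
by rewrite !(rmorphB, rmorphM) rmorph_nat; ring.
Qed.

Lemma hL_window_sum l x f m : (1 <= l)%N -> left_orth l x ->
  hL q m (window_sum l x f) = window_sum l x (hm_coef (l == 1%N) f m).
Proof.
move=> l_ge1 x_orth.
suff : hL q m (window_sum l x f) = window_sum l x (hm_coef (l == 1%N) f m) /\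
       hL q m.+1 (window_sum l x f) = window_sum l x (hm_coef (l == 1%N) f m.+1) by case.
elim: m => [|m [IHm IHm1]]; first by rewrite hL0 h1_window_sum.
split=> //; apply: functional_extensionality => w.
have := hL1_hL m w (window_sum_reduced_supp l x f).
rewrite IHm1 IHm h1_window_sum // => rec.
by rewrite [hm_coef _ _ m.+2]/= window_sum_lincomb rec pqE; ring.
Qed.

Definition coefT (f : nat -> nat -> R) : nat -> nat -> R := fun k j => f j k.

Lemma drop_take_rev (w : word) d l k : size w = (d + l)%N -> (k <= d)%N ->
  drop k (take (k + l) (rev w)) = rev (drop (d - k) (take (d - k + l) w)).
Proof.
move=> size_w k_le.
rewrite take_rev size_w (_ : (d + l - (k + l) = d - k)%N); last by lia.
rewrite drop_rev size_drop size_w (_ : (d + l - (d - k) - k = l)%N); last by lia.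
by rewrite take_drop addnC.
Qed.

Lemma vrev_window_sum l x f : vrev (window_sum l x f) = window_sum l (vrev x) (coefT f).
Proof.
apply: functional_extensionality => w; rewrite /vrev /window_sum reduced_rev size_rev.
case: ifP => // /andP[_ l_le].
set d := (size w - l)%N.
rewrite (reindex_inj rev_ord_inj) /=; apply: eq_bigr => k _.
have k_le : (k <= d)%N by rewrite -ltnS.
rewrite subSS (@drop_take_rev w d l (d - k)) ?leq_subr //; last by rewrite /d subnK.
by rewrite subKn.
Qed.

Definition coef1 : nat -> nat -> R := fun k j => ((k == 0) && (j == 0))%:R.

Lemma window_sum_coef1 l x : inCl l x -> window_sum l x coef1 = x.
Proof.
move=> x_supp; apply: functional_extensionality => w; rewrite /window_sum.
case: ifP => [/andP[red_w l_le]|w_out]; last first.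
  by apply/esym/eqP; apply: contraFT w_out => /x_supp[-> ->]; rewrite leqnn.
rewrite big_ord_recl big1 ?addr0 => [|k _]; last by rewrite /coef1 /= rmorph0 mul0r.
rewrite /coef1 /= subn0 drop0 add0n.
case: eqP => [size_w|size_w].
  by rewrite rmorph1 mul1r take_oversize //; move: size_w l_le; lia.
rewrite rmorph0 mul0r; apply/esym/eqP; apply: contraT => /x_supp[_ size_wl].
by move: size_w; rewrite size_wl subnn.
Qed.

Definition hxh_coef b m n := coefT (hm_coef b (coefT (hm_coef b coef1 m)) n).

Lemma hxh_window_sum l x m n : (1 <= l)%N -> left_orth l x -> left_orth l (vrev x) ->
  hxh q m x n = window_sum l x (hxh_coef (l == 1%N) m n).
Proof.
move=> l_ge1 x_orth rx_orth.
rewrite /hxh hR_vrev -{1}(window_sum_coef1 x_orth.1) hL_window_sum // vrev_window_sum.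
by rewrite hL_window_sum // vrev_window_sum vrevK.
Qed.

(** * Support and corner of the coefficient arrays *)

Definition coef_supp (f : nat -> nat -> R) M N :=
  forall k j, (M < k)%N || (N < j)%N -> f k j = 0.

Lemma coef1_supp : coef_supp coef1 0 0.
Proof. by move=> [|k] [|j] //= _; rewrite andbF. Qed.

Lemma coefT_supp f M N : coef_supp f M N -> coef_supp (coefT f) N M.
Proof. by move=> f_supp k j kj_out; apply: f_supp; rewrite orbC. Qed.

Lemma h1_coef_supp b f M N : coef_supp f M N -> coef_supp (h1_coef b f) M.+1 N.
Proof.
move=> f_supp k j kj_out; rewrite /h1_coef.
have -> : (if k is k'.+1 then f k' j else 0) = 0.
  by case: k kj_out => // k kj_out; apply: f_supp; move: kj_out; lia.
have -> : (if b && (k == 0)%N then f 0%N j.+1 else 0) = 0.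
  by case: ifP => // /andP[_ /eqP k0]; apply: f_supp; move: kj_out; rewrite k0; lia.
by rewrite !f_supp ?mulr0 ?addr0 ?subr0 //; move: kj_out; lia.
Qed.

Lemma h1_coef_lead b f M N j : coef_supp f M N -> h1_coef b f M.+1 j = f M j.
Proof.
move=> f_supp; rewrite /h1_coef /= andbF (f_supp M.+1 j) ?(f_supp M.+2 j) ?ltnSn //.
  by rewrite !mulr0 !addr0 subr0.
by rewrite ltnW.
Qed.

Lemma hm_coefSS b f m k j : hm_coef b f m.+2 k j = h1_coef b (hm_coef b f m.+1) k j
  - pcoef * hm_coef b f m.+1 k j - (if m is 0 then L else L.-1)%:R * hm_coef b f m k j.
Proof. by []. Qed.

Lemma hm_coef_supp b f M N m : coef_supp f M N -> coef_supp (hm_coef b f m) (M + m) N.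
Proof.
move=> f_supp.
suff : coef_supp (hm_coef b f m) (M + m) N /\ coef_supp (hm_coef b f m.+1) (M + m.+1) N.
  by case.
elim: m => [|m [IHm IHm1]]; first by rewrite addn0 addn1; split=> //; apply: h1_coef_supp.
split=> // k j kj_out; rewrite hm_coefSS (h1_coef_supp b IHm1) ?IHm1 ?IHm; try by move: kj_out; lia.
by rewrite !mulr0 !subr0.
Qed.

Lemma hm_coef_lead b f M N m j : coef_supp f M N -> hm_coef b f m (M + m) j = f M j.
Proof.
move=> f_supp.
suff : hm_coef b f m (M + m) j = f M j /\ hm_coef b f m.+1 (M + m.+1) j = f M j by case.
elim: m => [|m [IHm IHm1]]; first by rewrite addn0 addn1; split=> //; apply: h1_coef_lead f_supp.
split=> //; rewrite hm_coefSS addnS (h1_coef_lead b j (hm_coef_supp b (m:=m.+1) f_supp)) -addnS IHm1.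
rewrite (hm_coef_supp b (m:=m.+1) f_supp) ?(hm_coef_supp b (m:=m) f_supp); try lia.
by rewrite !mulr0 !subr0.
Qed.

Lemma hxh_coef_supp b m n : coef_supp (hxh_coef b m n) m n.
Proof.
apply: coefT_supp; rewrite -[n]add0n; apply: hm_coef_supp.
by apply: coefT_supp; rewrite -[m]add0n; apply: hm_coef_supp coef1_supp.
Qed.

Lemma hxh_coef_lead b m n : hxh_coef b m n m n = 1.
Proof.
have supp_m : coef_supp (coefT (hm_coef b coef1 m)) 0 m.
  by apply: coefT_supp; rewrite -[m]add0n; apply: hm_coef_supp coef1_supp.
rewrite /hxh_coef /coefT -[n in hm_coef _ _ n n]add0n (hm_coef_lead b n m supp_m) /coefT.
by rewrite -[m in hm_coef _ _ m m]add0n (hm_coef_lead b m 0 coef1_supp).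
Qed.

Definition window l (x : vec) k j : vec := fun w =>
  if reduced w && (size w == k + j + l)%N then x (drop k (take (k + l) w)) else 0.

Lemma window_sum_top l x f K J w : coef_supp f K J -> f K J = 1 -> size w = (K + J + l)%N ->
  window_sum l x f w = window l x K J w.
Proof.
move=> f_supp f_top size_w; rewrite /window_sum /window size_w leq_addl eqxx !andbT.
case: (reduced w) => //; rewrite addnK.
have K_lt : (K < (K + J).+1)%N by lia.
rewrite (bigD1 (Ordinal K_lt)) //= big1 ?addr0; first by rewrite addKn f_top mul1r.
move=> k ne_kK; rewrite f_supp ?mul0r //.
have : nat_of_ord k != K by apply: contra ne_kK => /eqP k_K; apply/eqP; apply: val_inj.
by have := ltn_ord k; lia.
Qed.

Lemma gmn_window l x k j : (1 <= l)%N -> left_orth l x -> left_orth l (vrev x) ->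
  gmn q l x k j = window l x k j.
Proof.
move=> l_ge1 x_orth rx_orth; apply: functional_extensionality => w.
rewrite /gmn /proj (hxh_window_sum _ _ l_ge1 x_orth rx_orth).
case: eqP => [size_w|size_w].
  exact: (window_sum_top x (hxh_coef_supp _ (m:=k) (n:=j)) (hxh_coef_lead _ k j) size_w).
by rewrite /window; case: eqP; rewrite ?andbF.
Qed.

Lemma sum_ord_match n k d (F : nat -> R[i]) : (forall j, (n < j)%N -> F j = 0) ->
  \sum_(j < n.+1) (if (k + j == d)%N then F j else 0) = if (k <= d)%N then F (d - k)%N else 0.
Proof.
move=> F_supp; case: leqP => k_d; last first.
  by rewrite big1 // => j _; case: eqP => // kj; move: k_d; lia.
case: (ltnP n (d - k)) => n_lt.
  rewrite F_supp // big1 // => j _; case: eqP => // kj.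
  by have := ltn_ord j; move: n_lt kj; lia.
have dk_lt : (d - k < n.+1)%N by lia.
rewrite (bigD1 (Ordinal dk_lt)) //= big1 ?addr0; first by rewrite subnKC // eqxx.
move=> j ne_j; case: eqP => // kj.
by case/eqP: ne_j; apply: val_inj => /=; lia.
Qed.

Lemma window_sum_box l x f m n w : coef_supp f m n ->
  window_sum l x f w = \sum_(k < m.+1) \sum_(j < n.+1) (f k j)%:C * window l x k j w.
Proof.
move=> f_supp; rewrite /window_sum /window.
case red_w: (reduced w) => /=; last first.
  by rewrite big1 // => k _; rewrite big1 // => j _; rewrite mulr0.
case: (leqP l (size w)) => l_le; last first.
  rewrite big1 // => k _; rewrite big1 // => j _.
  by rewrite (_ : (size w == k + j + l)%N = false) ?mulr0 //; apply/eqP; lia.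
set d := (size w - l)%N.
have row_sum (k : nat) : \sum_(j < n.+1) (f k j)%:C *
    (if (size w == k + j + l)%N then x (drop k (take (k + l) w)) else 0) =
    if (k <= d)%N then (f k (d - k)%N)%:C * x (drop k (take (k + l) w)) else 0.
  rewrite -(@sum_ord_match n k d (fun j => (f k j)%:C * x (drop k (take (k + l) w)))).
    apply: eq_bigr => j _.
    rewrite (_ : (size w == k + j + l)%N = (k + j == d)%N); last by apply/eqP/eqP; lia.
    by case: ifP; rewrite ?mulr0.
  by move=> j j_gt; rewrite f_supp ?rmorph0 ?mul0r // j_gt orbT.
under [RHS]eq_bigr => k _ do rewrite row_sum.
pose F k := (f k (d - k)%N)%:C * x (drop k (take (k + l) w)).
rewrite (big_ord_widen (m.+1 + d.+1) F) ?leq_addl //.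
rewrite (big_ord_widen (m.+1 + d.+1) (fun k => if (k <= d)%N then F k else 0)) ?leq_addr //.
rewrite [LHS]big_mkcond [RHS]big_mkcond; apply: eq_bigr => k _ /=.
rewrite ltnS /F; case: (leqP k d) => k_le; last by case: ifP.
case: (ltnP m k) => m_lt; last by rewrite ltnS m_lt.
by rewrite f_supp ?m_lt // rmorph0 mul0r; case: ifP.
Qed.

Definition coef_diag_add (f : nat -> nat -> R) : nat -> nat -> R :=
  fun k j => f k j + f k.+1 j.+1.

Lemma h1_coef_diag_add f : coef_diag_add (h1_coef true f) = h1_coef false (coef_diag_add f).
Proof.
apply: functional_extensionality => k; apply: functional_extensionality => j.
by rewrite /coef_diag_add /h1_coef; case: k => [|k] /=; ring.
Qed.

Lemma hm_coef_diag_add f m : coef_diag_add (hm_coef true f m) = hm_coef false (coef_diag_add f) m.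
Proof.
suff : coef_diag_add (hm_coef true f m) = hm_coef false (coef_diag_add f) m /\
       coef_diag_add (hm_coef true f m.+1) = hm_coef false (coef_diag_add f) m.+1 by case.
elim: m => [|m [IHm IHm1]]; first by split=> //; rewrite /= h1_coef_diag_add.
split=> //; apply: functional_extensionality => k; apply: functional_extensionality => j.
rewrite hm_coefSS -IHm1 -IHm -h1_coef_diag_add /coef_diag_add !hm_coefSS.
by ring.
Qed.

Lemma hxh_coef_diag_add m n : hxh_coef false m n = coef_diag_add (hxh_coef true m n).
Proof.
have coef1_diag : coef_diag_add coef1 = coef1.
  by apply: functional_extensionality => k; apply: functional_extensionality => j; rewrite /coef_diag_add /coef1 /= addr0.
have coefT_diag g : coefT (coef_diag_add g) = coef_diag_add (coefT g) by [].
by rewrite /hxh_coef -{1}coef1_diag -hm_coef_diag_add coefT_diag -hm_coef_diag_add coefT_diag.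
Qed.

(** * Orthogonality to [S_l] *)

Definition delta_vec (v : word) : vec := fun w => (w == v)%:R.

Lemma inCl_delta_vec v : reduced v -> inCl (size v) (delta_vec v).
Proof. by move=> red_v w; rewrite /delta_vec; case: (w =P v) => [-> _ | _]; rewrite ?eqxx. Qed.

Lemma inCl_vrev l x : inCl l x -> inCl l (vrev x).
Proof. by move=> x_supp w /x_supp[red_w size_w]; rewrite -reduced_rev -(size_rev w). Qed.

Lemma hL1_zero : hL q 1 (fun _ : word => 0 : R[i]) = (fun _ => 0).
Proof.
apply: functional_extensionality => w; rewrite hL1 big1 // => s _.
by rewrite /lmulS; case: ifP => //; case: startsw; rewrite ?mulr0 addr0.
Qed.

Lemma hR1_zero : hR q (fun _ : word => 0 : R[i]) 1 = (fun _ => 0).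
Proof. by rewrite hR_vrev hL1_zero. Qed.

Lemma proj_vrev l y : proj l (vrev y) = vrev (proj l y).
Proof. by apply: functional_extensionality => w; rewrite /proj /vrev size_rev. Qed.

Lemma inner_vrev l x y : inner_l l (vrev x) (vrev y) = inner_l l x y.
Proof.
rewrite /inner_l (reindex_inj (h := @rev_tuple l _)) /=; last first.
  by move=> t1 t2 /(congr1 val) /= /(congr1 rev); rewrite !revK => /val_inj.
by apply: eq_bigr => t _; rewrite /vrev revK.
Qed.

Lemma inSl_vrev l y : inSl q l y -> inSl q l (vrev y).
Proof.
move=> [x1 [x2 [x1_supp [x2_supp ->]]]].
exists (vrev x2), (vrev x1); split; first exact: inCl_vrev.
split; first exact: inCl_vrev.
apply: functional_extensionality => w; rewrite addrC (hR_vrev (vrev x1)) vrevK.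
by rewrite -(vrevK (hL q 1 (vrev x2))) -hR_vrev !proj_vrev.
Qed.

Lemma inComplS_vrev l x : inComplS q l x -> inComplS q l (vrev x).
Proof.
move=> [x_supp x_orth]; split; first exact: inCl_vrev.
by move=> y /inSl_vrev y_in; rewrite -(vrevK y) inner_vrev x_orth.
Qed.

Lemma inner_hL1_delta_vec l x v : inCl l.+1 x -> size v = l ->
  inner_l l.+1 x (proj l.+1 (hL q 1 (delta_vec v))) = \sum_(s : 'I_L) x (s :: v).
Proof.
move=> x_supp size_v; rewrite /inner_l big_tuple_cons; apply: eq_bigr => a _.
have delta_coef (t : l.-tuple 'I_L) : x (a :: t) * Num.conj (proj l.+1 (hL q 1 (delta_vec v)) (a :: t))
    = x (a :: t) * (t == v :> word)%:R.
  have [->|/x_supp[red_at _]] := eqVneq (x (a :: t)) 0; first by rewrite !mul0r.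
  rewrite /proj /= size_tuple eqxx hL1_cons // /delta_vec.
  rewrite (_ : (a :: t == v) = false) ?mulr0 ?addr0; last by apply/eqP => at_v; move: size_v; rewrite -at_v /= size_tuple; lia.
  rewrite big1 ?addr0; first by case: (_ == _); rewrite ?rmorph1 ?rmorph0.
  by move=> s _; apply/eqP; rewrite pnatr_eq0 eqb0; apply/eqP => sat_v; move: size_v; rewrite -sat_v /= size_tuple; lia.
rewrite (eq_bigr _ (fun t _ => delta_coef t)).
have size_v' : size v == l by rewrite size_v.
rewrite (bigD1 (Tuple size_v')) //= eqxx mulr1 big1 ?addr0 // => t ne_tv.
case: eqP => [t_v|]; last by rewrite mulr0.
by case/eqP: ne_tv; apply: val_inj.
Qed.

Lemma inComplS_left_orth l x : (1 <= l)%N -> inComplS q l x -> left_orth l x.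
Proof.
case: l => // l _ [x_supp x_orth]; split=> // v.
have [/andP[red_v /eqP size_v]|v_out] := boolP (reduced v && (size v == l)).
  rewrite -(inner_hL1_delta_vec x_supp size_v); apply: x_orth.
  exists (delta_vec v), (fun _ => 0 : R[i]).
  split; first by rewrite -size_v; apply: inCl_delta_vec.
  split; first by move=> w; rewrite eqxx.
  by rewrite hR1_zero; apply: functional_extensionality => w; rewrite /proj [in RHS]if_same addr0.
rewrite big1 // => s _; apply/eqP; apply: contraNT v_out => /x_supp[red_sv size_sv].
by case: size_sv => ->; rewrite (path_sorted red_sv : reduced v) eqxx.
Qed.

Lemma hxh_gmn_expansion l (x : vec) m n : (1 <= l)%N -> inComplS q l x ->
  hxh q m x n = (fun w =>
    \sum_(k < m.+1) \sum_(j < n.+1) (hxh_coef (l == 1%N) m n k j)%:C * gmn q l x k j w).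
Proof.
move=> l_ge1 x_compl.
have x_orth := inComplS_left_orth l_ge1 x_compl.
have rx_orth := inComplS_left_orth l_ge1 (inComplS_vrev x_compl).
rewrite (hxh_window_sum _ _ l_ge1 x_orth rx_orth); apply: functional_extensionality => w.
rewrite (window_sum_box _ _ w (hxh_coef_supp _ (m:=m) (n:=n))).
by apply: eq_bigr => k _; apply: eq_bigr => j _; rewrite gmn_window.
Qed.

End HeckeAlgebra.

Unset Implicit Arguments.

Theorem lemma3p5 (R : realType) (L : nat) (q : R) (l : nat)
    (beta gamma : vec R L) :
  (3 <= L)%N ->
  ((L - 1)%:R)^-1 <= q <= 1 ->
  (2 <= l)%N ->
  inComplS q 1 beta ->
  inComplS q l gamma ->
  forall m n : nat, exists b c : nat -> nat -> R,
    hxh q m beta n =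
      (fun w => \sum_(k < m.+1) \sum_(j < n.+1) (b k j)%:C * gmn q 1 beta k j w)
    /\ hxh q m gamma n =
      (fun w => \sum_(k < m.+1) \sum_(j < n.+1) (c k j)%:C * gmn q l gamma k j w)
    /\ ((1 <= m)%N -> (1 <= n)%N ->
        forall k j : nat, (k <= m)%N -> (j <= n)%N ->
          c k j = b k j + (if (k < m)%N && (j < n)%N then b k.+1 j.+1 else 0)).
Proof.
move=> _ _ l_ge2 beta_compl gamma_compl m n.
have l_ne1 : (l == 1%N) = false by case: l l_ge2 {gamma_compl} => [|[|l]].
exists (hxh_coef L q true m n), (hxh_coef L q false m n); split.
  exact: hxh_gmn_expansion.
split; first by rewrite -l_ne1; apply: hxh_gmn_expansion => //; apply: ltnW.
move=> _ _ k j k_le j_le; rewrite hxh_coef_diag_add /coef_diag_add.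
case: ifP => // /negbT; rewrite negb_and -!leqNgt => kj_edge.
by rewrite (@hxh_coef_supp R L q true m n k.+1 j.+1) ?addr0 // !ltnS.
Qed.
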